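(* Let $(P,Q)$ be a solution of the Cucker–Smale model with velocity control described in the context, let $l\in[N]$ and $[l]=\{1,\dots,l\}$. Then, for $t>0$ (wherever the derivative of $t\mapsto\|P(t)\|_{[l]}$ exists), the following differential inequalities hold: (1) \[ \frac{d}{dt}\|P\|_{[l]}\le-\frac{\kappa\mathcal M l}{N}\psi(\|Q\|_{[l]})\|P\|_{[l]}+\frac{2\kappa M_{G'}(N-l)P^0_M L_{\psi,[l]}}{N}\|Q\|_{[l]}, \] where \[ L_{\psi,[l]}(t):=\sup_{\substack{r,s\ge q_{[l]}(t)\\ r\ne s}}\left|\frac{\psi(r)-\psi(s)}{r-s}\right|<\infty,\qquad q_{[l]}(t):=\min_{i'\in[l],\,j'\notin[l]}|q_{i'}(t)-q_{j'}(t)| \] (when $l=N$ the second term is absent since $N-l=0$); (2) \[ \frac{d}{dt}\|P\|_{[l]}\le-\frac{\kappa\mathcal M l}{N}\psi(\|Q\|_{[l]})\|P\|_{[l]}+\frac{4\kappa P^0_M M_{G'}l(N-l)}{N}\max_{i'\in[l],\,j'\notin[l]}\psi(|q_{i'}-q_{j'}|). \]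
   Context: Let $N\ge1$, $d\ge1$, $\kappa>0$, $[N]=\{1,\dots,N\}$. The velocity control function $G:\mathbb R^d\to\mathbb R^d$ is $G(p)=g(|p|)\,p/|p|$ for $p\ne0$, $G(0)=0$, with $g\in C^1([0,\infty))$, $g(0)=0$, $0<m\le g'\le M$ on every compact interval (constants depending on the interval), and $g$ convex or concave on $(0,\infty)$. The kernel $\psi:(0,\infty)\to(0,\infty)$ is bounded, Lipschitz continuous and nonincreasing. The model is, for $i\in[N]$, $t>0$: \[ \dot q_i=G(p_i),\qquad \dot p_i=\frac{\kappa}{N}\sum_{k=1}^N\psi(|q_k-q_i|)\big(G(p_k)-G(p_i)\big),\qquad (q_i,p_i)(0)=(q_i^0,p_i^0)\in\mathbb R^d\times\mathbb R^d. \] Notation: for $S\subset[N]$, $\|Q\|_S^2=\sum_{i,j\in S}|q_i-q_j|^2$, $\|P\|_S^2=\sum_{i,j\in S}|p_i-p_j|^2$; $P^0_M=\max_i|p_i^0|$, $M_{G'}=\max\{g'(r):0\le r\le P^0_M\}$, $m_{G'}=\min\{g'(r):0\le r\le P^0_M\}$, $\mathcal M=\min\{m_{G'},\,m_{G'}^2/M_{G'}\}$. *)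

From HB Require Import structures.
From mathcomp Require Import all_boot all_order all_algebra.
From mathcomp Require Import all_classical all_reals all_analysis.
Set Implicit Arguments. Unset Strict Implicit. Unset Printing Implicit Defensive.
Import Order.TTheory GRing.Theory Num.Theory.
Import numFieldNormedType.Exports.
Local Open Scope classical_set_scope.
Local Open Scope ring_scope.

Section CSdefs.
Variable R : realType.

Definition enorm (d : nat) (p : 'rV[R]_d) : R :=
  Num.sqrt (\sum_(k < d) (p 0 k) ^+ 2).

Definition Gvel (g : R -> R) (d : nat) (p : 'rV[R]_d) : 'rV[R]_d :=
  if p == 0 then 0 else (g (enorm p) / enorm p) *: p.

(* ||X||_[l] = sqrt( sum_{i,j in [l]} |x_i - x_j|^2 ), [l] = indices i with val i < l
   (0-based indexing of [l] = {1,...,l}). *)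
Definition normS (N d : nat) (l : nat) (x : 'I_N -> 'rV[R]_d) : R :=
  Num.sqrt (\sum_(i < N | (i < l)%N) \sum_(j < N | (j < l)%N)
              (enorm (x i - x j)) ^+ 2).

Definition qmin (N d : nat) (l : nat) (x : 'I_N -> 'rV[R]_d) : R :=
  inf [set enorm (x i - x j) | i in [set i : 'I_N | (i < l)%N] & j in [set j : 'I_N | (l <= j)%N]].

Definition Lpsi (psi : R -> R) (a : R) : R :=
  sup [set z | exists r s : R,
         [/\ a <= r, a <= s, r <> s & z = `|(psi r - psi s) / (r - s)|]].

(* max_{i in [l], j notin [l]} psi(|q_i - q_j|)  (psi > 0, so the default 0 is harmless;
   it only matters when l = N, where the term is multiplied by N - l = 0). *)
Definition psimax (psi : R -> R) (N d : nat) (l : nat) (x : 'I_N -> 'rV[R]_d) : R :=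
  \big[Num.max/0]_(i < N | (i < l)%N) \big[Num.max/0]_(j < N | (l <= j)%N)
     psi (enorm (x i - x j)).

Definition PM (N d : nat) (p0 : 'I_N -> 'rV[R]_d) : R :=
  \big[Num.max/0]_(i < N) enorm (p0 i).

Definition convex_on_pos (g : R -> R) : Prop :=
  forall x y (t : R), 0 < x -> 0 < y -> 0 <= t <= 1 ->
    g ((1 - t) * x + t * y) <= (1 - t) * g x + t * g y.
Definition concave_on_pos (g : R -> R) : Prop :=
  forall x y (t : R), 0 < x -> 0 < y -> 0 <= t <= 1 ->
    (1 - t) * g x + t * g y <= g ((1 - t) * x + t * y).

End CSdefs.

From HB Require Import structures.
From mathcomp Require Import all_boot all_order all_algebra.
From mathcomp Require Import all_classical all_reals all_analysis.
From mathcomp Require Import ring lra.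
Import Order.TTheory GRing.Theory Num.Theory.
Import numFieldNormedType.Exports.
Local Open Scope classical_set_scope.
Local Open Scope ring_scope.

(* Write A_i = sum_k psi(|q_k - q_i|) (G(p_k) - G(p_i)), so that p_i' = (kappa/N) A_i and
   ||P|| d||P||/dt = (kappa/N) sum_{i,j in [l]} <p_i - p_j, A_i - A_j>.  Splitting the sum
   over k into k in [l] and k outside [l]: after symmetrization the internal part equals
   -l sum_{i,k in [l]} psi_ik <p_i - p_k, G(p_i) - G(p_k)> <= -l psi(||Q||) m_{G'} ||P||^2,
   as psi is nonincreasing, |q_i - q_k| <= ||Q||, and G is m_{G'}-coercive on the ball of
   radius P^0_M, which contains every p_i(t) by a maximum principle for |p_i|^2.
   Each external agent k contributes, after symmetrization in (i, j), at most
   2 M_{G'} P^0_M sum_{i,j} |psi_ik - psi_jk| |p_i - p_j|; Cauchy-Schwarz bounds this sum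
   by L_{psi,[l]} ||Q|| ||P|| (psi is Lipschitz beyond q_[l]) or by l psimax ||P||.
   Dividing by ||P|| gives both estimates, since calM <= m_{G'}; where ||P|| = 0 it is
   minimal and its derivative is <= 0. *)

(** * Cauchy-Schwarz and the Euclidean norm *)

Lemma sum_mul_le_sqrt (R : rcfType) (I : finType) (P : pred I) (x y : I -> R) :
  \sum_(i | P i) x i * y i <=
  Num.sqrt (\sum_(i | P i) x i ^+ 2) * Num.sqrt (\sum_(i | P i) y i ^+ 2).
Proof.
set A := \sum_(i | P i) x i ^+ 2; set B := \sum_(i | P i) y i ^+ 2.
set C := \sum_(i | P i) x i * y i.
have A0 : 0 <= A by apply: sumr_ge0 => i _; exact: sqr_ge0.
have B0 : 0 <= B by apply: sumr_ge0 => i _; exact: sqr_ge0.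
suff CAB : C ^+ 2 <= A * B.
  rewrite -sqrtrM //; apply: le_trans (ler_norm C) _.
  by rewrite -sqrtr_sqr ler_sqrt // mulr_ge0.
have [Az|Anz] := eqVneq A 0.
  have x0 i : P i -> x i = 0.
    move=> Pi; apply/eqP; rewrite -sqrf_eq0; apply/eqP.
    by apply: (psumr_eq0P _ Az) => // j _; exact: sqr_ge0.
  by rewrite /C big1 ?expr0n ?mulr_ge0 // => i Pi; rewrite x0 // mul0r.
have Ap : 0 < A by rewrite lt_def Anz A0.
(* evaluate the nonnegative quadratic [s |-> sum_i (x_i s + y_i)^2] at its minimiser *)
have E s : \sum_(i | P i) (x i * s + y i) ^+ 2 = s ^+ 2 * A + 2 * s * C + B.
  rewrite /A /B /C !mulr_sumr -!big_split /=; apply: eq_bigr => i _; ring.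
have : 0 <= \sum_(i | P i) (x i * (- C / A) + y i) ^+ 2.
  by apply: sumr_ge0 => i _; exact: sqr_ge0.
have -> : \sum_(i | P i) (x i * (- C / A) + y i) ^+ 2 = B - C ^+ 2 / A.
  by rewrite E; field.
by rewrite subr_ge0 ler_pdivrMr // mulrC.
Qed.

Lemma sum2_mul_le_sqrt (R : rcfType) (I : finType) (P : pred I) (x y : I -> I -> R) :
  \sum_(i | P i) \sum_(j | P j) x i j * y i j <=
  Num.sqrt (\sum_(i | P i) \sum_(j | P j) x i j ^+ 2) *
  Num.sqrt (\sum_(i | P i) \sum_(j | P j) y i j ^+ 2).
Proof.
rewrite !pair_big_dep /=.
exact: (sum_mul_le_sqrt _ _ _ (fun u => x u.1 u.2) (fun u => y u.1 u.2)).
Qed.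

Section Euclidean.
Context {R : realType} {d : nat}.
Implicit Types u v w : 'rV[R]_d.

Definition dot u v : R := \sum_(k < d) u 0 k * v 0 k.

Lemma dotC u v : dot u v = dot v u.
Proof. by apply: eq_bigr => k _; rewrite mulrC. Qed.

Lemma dotDl u w v : dot (u + w) v = dot u v + dot w v.
Proof. by rewrite /dot -big_split; apply: eq_bigr => k _; rewrite !mxE mulrDl. Qed.

Lemma dotNl u v : dot (- u) v = - dot u v.
Proof. by rewrite /dot -sumrN; apply: eq_bigr => k _; rewrite !mxE mulNr. Qed.

Lemma dotNN u v : dot (- u) (- v) = dot u v.
Proof. by rewrite dotNl dotC dotNl opprK dotC. Qed.

Lemma dotBl u w v : dot (u - w) v = dot u v - dot w v.
Proof. by rewrite dotDl dotNl. Qed.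

Lemma dotZl a u v : dot (a *: u) v = a * dot u v.
Proof. by rewrite /dot mulr_sumr; apply: eq_bigr => k _; rewrite !mxE mulrA. Qed.

Lemma dotBr u w v : dot v (u - w) = dot v u - dot v w.
Proof. by rewrite dotC dotBl !(dotC v). Qed.

Lemma dotZr a u v : dot v (a *: u) = a * dot v u.
Proof. by rewrite dotC dotZl dotC. Qed.

Lemma dot_sumr (I : finType) (P : pred I) (F : I -> 'rV[R]_d) v :
  dot v (\sum_(i | P i) F i) = \sum_(i | P i) dot v (F i).
Proof.
elim/big_rec2: _ => [|i y1 y2 Pi <-]; first by rewrite /dot big1 // => k _; rewrite mxE mulr0.
by rewrite dotC dotDl !(dotC _ v).
Qed.

Lemma dot_ge0 u : 0 <= dot u u.
Proof. by apply: sumr_ge0 => k _; rewrite -expr2 sqr_ge0. Qed.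

Lemma enorm_sqr u : enorm u ^+ 2 = dot u u.
Proof.
rewrite sqr_sqrtr; last by apply: sumr_ge0 => k _; exact: sqr_ge0.
by apply: eq_bigr => k _; rewrite expr2.
Qed.

Lemma enorm_ge0 u : 0 <= enorm u.
Proof. exact: sqrtr_ge0. Qed.

Lemma enorm_eq0 u : (enorm u == 0) = (u == 0).
Proof.
apply/idP/eqP => [|->]; last by rewrite /enorm big1 ?sqrtr0 // => k _; rewrite mxE expr0n.
rewrite sqrtr_eq0 => le0; apply/rowP => k; rewrite mxE; apply/eqP; rewrite -sqrf_eq0.
have /eqP sum0 : \sum_(k < d) u 0 k ^+ 2 == 0.
  by rewrite eq_le le0 sumr_ge0 // => i _; exact: sqr_ge0.
by apply/eqP; apply: (psumr_eq0P _ sum0) => // i _; exact: sqr_ge0.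
Qed.

Lemma dot_le_enorm u v : dot u v <= enorm u * enorm v.
Proof. exact: (sum_mul_le_sqrt _ _ _ (fun k => u 0 k) (fun k => v 0 k)). Qed.

Lemma enormN u : enorm (- u) = enorm u.
Proof. by rewrite /enorm; congr Num.sqrt; apply: eq_bigr => k _; rewrite mxE sqrrN. Qed.

Lemma enormZ a u : enorm (a *: u) = `|a| * enorm u.
Proof.
rewrite /enorm; under eq_bigr do rewrite mxE exprMn.
by rewrite -mulr_sumr sqrtrM ?sqr_ge0 // sqrtr_sqr.
Qed.

Lemma enorm_distC u v : enorm (u - v) = enorm (v - u).
Proof. by rewrite -enormN opprB. Qed.

Lemma norm_dot_le_enorm u v : `|dot u v| <= enorm u * enorm v.
Proof. by rewrite ler_norml dot_le_enorm lerNl -dotNl -(enormN u) dot_le_enorm. Qed.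

Lemma ler_enormD u v : enorm (u + v) <= enorm u + enorm v.
Proof.
rewrite -(@ler_pXn2r _ 2) ?nnegrE ?addr_ge0 ?enorm_ge0 //.
rewrite sqrrD !enorm_sqr !dotDl (dotC u (u + v)) (dotC v (u + v)) !dotDl (dotC v u).
by have := dot_le_enorm u v; lra.
Qed.

Lemma ler_enorm_dist u v : `|enorm u - enorm v| <= enorm (u - v).
Proof.
rewrite ler_norml; apply/andP; split.
  by have := ler_enormD (v - u) u; rewrite subrK enorm_distC; lra.
by have := ler_enormD (u - v) v; rewrite subrK; lra.
Qed.

End Euclidean.

(** * The velocity control G *)

(* Both sides are affine in [x]; the hypotheses are the inequality at [x = a b]
   and [x = - a b]. *)
Lemma radial_coercivity {R : realFieldType} (a b x al be m : R) :
  0 < a -> 0 < b -> - (a * b) <= x <= a * b ->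
  m * (a - b) ^+ 2 <= (a - b) * (al * a - be * b) ->
  m * (a + b) <= al * a + be * b ->
  m * (a ^+ 2 + b ^+ 2 - 2 * x) <= al * a ^+ 2 + be * b ^+ 2 - (al + be) * x.
Proof.
move=> a0 b0 /andP[xlo xhi] hminus hplus; have ab0 : 0 < a * b by exact: mulr_gt0.
have F1 : 0 <= (x + a * b) * ((a - b) * (al * a - be * b) - m * (a - b) ^+ 2).
  by apply: mulr_ge0; lra.
have F2 : 0 <= (a * b - x) * ((a + b) * (al * a + be * b - m * (a + b))).
  by apply: mulr_ge0; [lra | apply: mulr_ge0; lra].
rewrite -subr_ge0 -(pmulr_rge0 _ (mulr_gt0 (ltr0Sn _ 1) ab0)).
have -> : 2 * (a * b) * (al * a ^+ 2 + be * b ^+ 2 - (al + be) * x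
             - m * (a ^+ 2 + b ^+ 2 - 2 * x)) =
  (x + a * b) * ((a - b) * (al * a - be * b) - m * (a - b) ^+ 2) +
  (a * b - x) * ((a + b) * (al * a + be * b - m * (a + b))) by ring.
exact: addr_ge0.
Qed.

Section VelocityControl.
Context {R : realType} {d : nat}.
Variable g : R -> R.
Implicit Types p x : 'rV[R]_d.

Lemma Gvel0 : Gvel g 0 = 0 :> 'rV[R]_d.
Proof. by rewrite /Gvel eqxx. Qed.

Lemma GvelE p : Gvel g p = (g (enorm p) / enorm p) *: p.
Proof. by rewrite /Gvel; case: eqP => [->|//]; rewrite scaler0. Qed.

Lemma dot_Gvel x p : dot x (Gvel g p) = g (enorm p) / enorm p * dot x p.
Proof. by rewrite GvelE dotZr. Qed.

Lemma dot_Gvel_self p : dot p (Gvel g p) = g (enorm p) * enorm p.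
Proof.
rewrite dot_Gvel -enorm_sqr; have [->|nz] := eqVneq (enorm p) 0.
  by rewrite !mulr0 expr0n /= mulr0.
by rewrite expr2 mulrA divfK.
Qed.

Lemma enorm_Gvel p : g 0 = 0 -> 0 <= g (enorm p) -> enorm (Gvel g p) = g (enorm p).
Proof.
move=> g0 g_ge0; have [->|nz] := eqVneq p 0.
  by rewrite Gvel0 (_ : enorm 0 = 0) ?g0 //; apply/eqP; rewrite enorm_eq0.
have p0 : 0 < enorm p by rewrite lt_def enorm_eq0 nz enorm_ge0.
by rewrite GvelE enormZ ger0_norm ?divr_ge0 ?enorm_ge0 // divfK ?gt_eqF.
Qed.

Lemma Gvel_coercive m p p' :
  m * enorm p <= g (enorm p) -> m * enorm p' <= g (enorm p') ->
  m * (enorm p - enorm p') ^+ 2 <=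
    (enorm p - enorm p') * (g (enorm p) - g (enorm p')) ->
  m * dot (p - p') (p - p') <= dot (p - p') (Gvel g p - Gvel g p').
Proof.
move=> hp hp' hpp'.
have [->|nz] := eqVneq p 0.
  rewrite Gvel0 !sub0r !dotNN dot_Gvel_self -enorm_sqr expr2 mulrA.
  by rewrite ler_wpM2r ?enorm_ge0.
have [->|nz'] := eqVneq p' 0.
  rewrite Gvel0 !subr0 dot_Gvel_self -enorm_sqr expr2 mulrA.
  by rewrite ler_wpM2r ?enorm_ge0.
have a0 : 0 < enorm p by rewrite lt_def enorm_eq0 nz enorm_ge0.
have b0 : 0 < enorm p' by rewrite lt_def enorm_eq0 nz' enorm_ge0.
rewrite !(dotBl, dotBr) !dot_Gvel (dotC p' p) -!enorm_sqr.
set a := enorm p in a0 hp hpp' *; set b := enorm p' in b0 hp' hpp' *.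
have hx : - (a * b) <= dot p p' <= a * b by rewrite -ler_norml norm_dot_le_enorm.
have := @radial_coercivity _ a b _ (g a / a) (g b / b) m a0 b0 hx.
rewrite !divfK ?gt_eqF // => /(_ hpp'); rewrite -/a -/b.
have ab : m * (a + b) <= g a + g b by lra.
by move=> /(_ ab); congr (_ <= _); ring.
Qed.

End VelocityControl.

Section IncrementBounds.
Context {R : realType}.
Variables g dg : R -> R.
Implicit Types x y r : R.
Hypothesis g_deriv : forall r : R, 0 < r -> is_derive r 1 g (dg r).
Hypothesis g_deriv0 : (fun h : R => (g h - g 0) / h) @ 0^'+ --> dg 0.

Lemma g_continuous_pos x : 0 < x -> {for x, continuous g}.
Proof.
move=> x0; apply/differentiable_continuous/derivable1_diffP.
by apply: ex_derive; exact: g_deriv.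
Qed.

Lemma g_cvg_right x : 0 <= x -> g @ x^'+ --> g x.
Proof.
rewrite le_eqVlt => /predU1P[<-|x0]; last exact/cvg_at_right_filter/g_continuous_pos.
have : (fun h : R => h * ((g h - g 0) / h) + g 0) @ 0^'+ --> 0 * dg 0 + g 0.
  apply: cvgD; last exact: cvg_cst.
  by apply: cvgM => //; exact: cvg_at_right_filter cvg_id.
rewrite mul0r add0r; apply: cvg_trans; apply: near_eq_cvg; near=> h.
have h0 : 0 < h by near: h; exact: nbhs_right_gt.
by rewrite mulrC divfK ?gt_eqF // subrK.
Unshelve. all: by end_near. Qed.

Lemma increment_bounds (a b lo hi : R) : 0 <= b <= a ->
  (forall c, b < c < a -> lo <= dg c <= hi) ->
  lo * (a - b) <= g a - g b <= hi * (a - b).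
Proof.
move=> /andP[b0 ba] hc; have [<-|neq] := eqVneq b a; first by rewrite !subrr !mulr0 lexx.
have lt_ba : b < a by rewrite lt_def eq_sym neq ba.
have [c /[!in_itv] /= /andP[bc ca] ->] : exists2 c, c \in `]b, a[ & g a - g b = dg c * (a - b).
  apply: MVT => // [x /[!in_itv] /= /andP[bx _]|].
    by apply: g_deriv; exact: le_lt_trans bx.
  apply/continuous_within_itvP => //; split; last 1 first.
  - by apply/cvg_at_left_filter/g_continuous_pos; exact: le_lt_trans lt_ba.
  - by move=> x /[!in_itv] /= /andP[bx _]; apply: g_continuous_pos; exact: le_lt_trans bx.
  - exact: g_cvg_right.
have /andP[lo_c c_hi] := hc c ltac:(by rewrite bc ca).
by rewrite !ler_wpM2r // subr_ge0.
Qed.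

Hypothesis g0 : g 0 = 0.
Hypothesis dg_bounded : forall b : R, 0 <= b -> exists m M : R, 0 < m /\
  forall r : R, 0 <= r <= b -> m <= dg r <= M.

Lemma g_nondecreasing x y : 0 <= y <= x -> g y <= g x.
Proof.
move=> /andP[y0 yx]; have [m [M [m0 hm]]] := dg_bounded _ (le_trans y0 yx).
have /andP[inc _] : m * (x - y) <= g x - g y <= M * (x - y).
  apply: increment_bounds => [|c /andP[yc cx]]; first by rewrite y0 yx.
  by apply: hm; rewrite (le_trans y0 (ltW yc)) (ltW cx).
by rewrite -subr_ge0 (le_trans _ inc) // mulr_ge0 ?subr_ge0 // ltW.
Qed.

Section OnInterval.
Variable b : R.
Hypothesis b0 : 0 <= b.
Local Notation dgb := [set dg r | r in `[0, b]].

Let dgbP z : dgb z <-> exists2 r, 0 <= r <= b & dg r = z.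
Proof. by split=> -[r hr <-]; exists r => //; move: hr; rewrite /= in_itv. Qed.

Let dg_bounds : exists2 m, 0 < m & exists M, forall r, 0 <= r <= b -> m <= dg r <= M.
Proof. by have [m [M [m0 hm]]] := dg_bounded _ b0; exists m => //; exists M. Qed.

Lemma inf_dg_gt0 : 0 < inf dgb.
Proof.
have [m m0 [M hm]] := dg_bounds; apply: lt_le_trans m0 _.
apply: lb_le_inf => [|_ /dgbP[r /hm /andP[lo _] <-] //].
by exists (dg 0); apply/dgbP; exists 0; rewrite ?lexx.
Qed.

Lemma inf_dg_le r : 0 <= r <= b -> inf dgb <= dg r.
Proof.
have [m m0 [M hm]] := dg_bounds => hr; apply: ge_inf; last by apply/dgbP; exists r.
by exists m => _ /dgbP[s /hm /andP[lo _] <-].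
Qed.

Lemma sup_dg_ge r : 0 <= r <= b -> dg r <= sup dgb.
Proof.
have [m m0 [M hm]] := dg_bounds => hr; apply: ub_le_sup; last by apply/dgbP; exists r.
by exists M => _ /dgbP[s /hm /andP[_ hi] <-].
Qed.

Lemma sup_dg_gt0 : 0 < sup dgb.
Proof.
have h0 : (0 : R) <= 0 <= b by rewrite lexx b0.
exact: lt_le_trans inf_dg_gt0 (le_trans (inf_dg_le _ h0) (sup_dg_ge _ h0)).
Qed.

Lemma increment_inf_sup_dg x y : 0 <= y <= x -> x <= b ->
  inf dgb * (x - y) <= g x - g y <= sup dgb * (x - y).
Proof.
move=> /andP[y0 yx] xb; apply: increment_bounds => [|c /andP[yc cx]]; first by rewrite y0.
have hc : 0 <= c <= b by rewrite (le_trans y0 (ltW yc)) (le_trans (ltW cx) xb).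
by rewrite inf_dg_le ?sup_dg_ge.
Qed.

End OnInterval.

End IncrementBounds.

(** * Derivatives and a maximum principle *)

Lemma is_derive_bigsum {R : realType} {V W : normedModType R} (I : finType) (P : pred I)
    (h : I -> V -> W) (dh : I -> W) (x v : V) :
  (forall i, is_derive x v (h i) (dh i)) ->
  is_derive x v (fun s => \sum_(i | P i) h i s) (\sum_(i | P i) dh i).
Proof.
move=> hd; rewrite -fct_sumE.
by elim/big_ind2: _ => // [|f df g dg' ? ?]; [exact: is_derive_cst | exact: is_deriveD].
Qed.

Lemma is_derive_coord {R : realType} {d : nat} {x : R -> 'rV[R]_d} {t : R} {v} k :
  is_derive t 1 x v -> is_derive t 1 (fun s => x s 0 k) (v 0 k).
Proof.
move=> hx; have dx : derivable x t 1 by exact: ex_derive.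
have dk : derivable (fun s => x s 0 k) t 1 by move/derivable_mxP: dx; apply.
by have := derive_mx dx; rewrite derive_val => ->; rewrite mxE; exact: derivableP.
Qed.

Lemma is_derive_dot {R : realType} {d : nat} {x y : R -> 'rV[R]_d} {t : R} {vx vy} :
  is_derive t 1 x vx -> is_derive t 1 y vy ->
  is_derive t 1 (fun s => dot (x s) (y s)) (dot (x t) vy + dot vx (y t)).
Proof.
move=> hx hy; rewrite /dot -big_split /=; apply: is_derive_bigsum => k.
change (is_derive t 1 ((fun s => x s 0 k) * (fun s => y s 0 k))
  (x t 0 k * vy 0 k + vx 0 k * y t 0 k)).
apply: is_derive_eq (is_deriveM (is_derive_coord k hx) (is_derive_coord k hy)) _.
by rewrite /GRing.scale /= [vx 0 k * _]mulrC.
Qed.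

Lemma cvg_dot {R : realType} {d : nat} {T : Type} (F : set_system T) {FF : Filter F}
    (x y : T -> 'rV[R]_d) x0 y0 :
  x @ F --> x0 -> y @ F --> y0 -> (fun s => dot (x s) (y s)) @ F --> dot x0 y0.
Proof.
move=> cx cy; apply: cvg_big => // [|k _]; first exact: add_continuous.
have coord (z : T -> 'rV[R]_d) (z0 : 'rV[R]_d) : z @ F --> z0 -> (fun s => z s 0 k) @ F --> z0 0 k.
  exact: (continuous_cvg _ (@coord_continuous _ _ _ 0 k z0)).
by apply: cvgM; exact: coord.
Qed.

Lemma is_derive_lt0_left {R : realType} {h : R -> R} {x dh : R} :
  is_derive x 1 h dh -> dh < 0 ->
  exists2 del : R, 0 < del & forall u, 0 < u < del -> h x < h (x - u).
Proof.
move=> hd dh0.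
have : (fun u : R => u^-1 *: ((h \o shift x) (u *: 1) - h x)) @ 0^' --> dh.
  by rewrite -(@derive_val _ _ _ _ _ _ _ hd); exact: ex_derive.
move/cvgrPdist_lt => /(_ (- dh)); rewrite oppr_gt0 => /(_ dh0) /nbhs_ballP[del del0 Hd].
exists del => // u /andP[u0 ud].
have := Hd (- u); rewrite /ball /= sub0r opprK gtr0_norm // => /(_ ud).
rewrite oppr_eq0 gt_eqF // => /(_ isT).
rewrite /GRing.scale /= mulr1 (addrC (- u)) ltr_norml => /andP[lt _].
have : (- u)^-1 * (h (x - u) - h x) < 0 by lra.
by rewrite invrN mulNr oppr_lt0 pmulr_rgt0 ?invr_gt0 // subr_gt0.
Qed.

Lemma is_derive_min_le0 {R : realType} {h : R -> R} {x dh : R} :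
  is_derive x 1 h dh -> (forall y, h x <= h y) -> dh <= 0.
Proof.
move=> hd hmin; rewrite leNgt; apply/negP => dh0.
have [del del0 Hd] := is_derive_lt0_left (is_deriveN hd) (ltac:(by rewrite oppr_lt0) : - dh < 0).
have := Hd (del / 2) ltac:(apply/andP; split; lra).
by rewrite /GRing.opp /= ltrN2 ltNge hmin.
Qed.

Lemma near_within_ball {R : realType} {A : set R} {P : R -> Prop} {tau : R} :
  (\forall s \near within A (nbhs tau), P s) ->
  exists2 del : R, 0 < del & forall s, A s -> `|tau - s| < del -> P s.
Proof. by move=> /nbhs_ballP[del del0 Hd]; exists del => // s As hs; apply: Hd. Qed.

Lemma left_point {R : realType} {del tau : R} : 0 < del -> 0 < tau ->
  exists2 s, 0 <= s < tau & 0 < tau - s < del.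
Proof.
move=> del0 tau0; have m0 : 0 < Num.min del tau by rewrite lt_min del0 tau0.
have m_del : Num.min del tau <= del by rewrite ge_min lexx.
have m_tau : Num.min del tau <= tau by rewrite ge_min lexx orbT.
by exists (tau - Num.min del tau / 2); apply/andP; split; lra.
Qed.

Section MaximumPrinciple.
Context {R : realType} {n : nat}.
Implicit Types (s tau : R) (i k : 'I_n).

Lemma first_exit (u : 'I_n -> R -> R) (T : R) i0 :
  (forall i, {within `[0, +oo[, continuous (u i)}) ->
  (forall i, u i 0 < 0) -> 0 <= T -> 0 < u i0 T ->
  exists tau, [/\ 0 < tau, forall i s, 0 <= s < tau -> u i s <= 0,
                  forall k, u k tau <= 0 & exists i, u i tau = 0].
Proof.
move=> uc u0 T0 uT; pose A := [set` `[0, +oo[%R] : set R.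
have A_ge0 s : A s <-> 0 <= s by rewrite /A /= in_itv /= andbT.
have cvgu i tau : 0 <= tau -> u i @ within A (nbhs tau) --> u i tau.
  by move=> tau0; move/subspace_continuousP: (uc i); apply; apply/A_ge0.
pose V := [set s : R | 0 <= s /\ exists i, 0 < u i s].
have Vlb : has_lbound V by exists 0 => s [].
have VT : V T by split => //; exists i0.
pose tau := inf V.
have tau0 : 0 <= tau by apply: lb_le_inf => [|s []]; first by exists T.
have before i s : 0 <= s < tau -> u i s <= 0.
  move=> /andP[s0 st]; rewrite leNgt; apply/negP => us.
  by have := ge_inf Vlb (conj s0 (ex_intro _ i us)); rewrite leNgt st.
have at_tau k : u k tau <= 0.
  rewrite leNgt; apply/negP => uk.
  have tau_pos : 0 < tau.
    rewrite lt_def tau0 andbT; apply: contraTneq uk => ->; rewrite -leNgt ltW //.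
  have [del del0 Hd] := near_within_ball (cvgr_gt _ (cvgu k tau tau0) 0 uk).
  have [s /andP[s0 st] /andP[ts sd]] := left_point del0 tau_pos.
  have := Hd s (proj2 (A_ge0 s) s0); rewrite gtr0_norm // => /(_ sd).
  by rewrite ltNge before // s0 st.
have [i ui] : exists i, u i tau = 0.
  apply: contrapT => nz.
  have lt0 k : u k tau < 0.
    by rewrite lt_def at_tau andbT; apply/eqP => eq0; apply: nz; exists k.
  have /near_within_ball[del del0 Hd] : \forall s \near within A (nbhs tau), forall k, u k s < 0.
    by apply: filter_forall => k; exact: cvgr_lt _ (cvgu k tau tau0) 0 (lt0 k).
  have [e [e0 [i ui]] ee] := inf_adherent del0 (conj (ex_intro _ T VT) Vlb).
  have te : tau <= e by apply: ge_inf => //; split => //; exists i.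
  have := Hd e; rewrite A_ge0 distrC ger0_norm ?subr_ge0 // => /(_ e0) /(_ ltac:(lra)) /(_ i).
  by rewrite ltNge ltW.
exists tau; split => //; last by exists i.
by rewrite lt_def tau0 andbT; apply: contra_eq_neq ui => ->; rewrite lt_eqF.
Qed.

Lemma max_principle (phi dphi : 'I_n -> R -> R) (B : R) :
  (forall i, {within `[0, +oo[, continuous (phi i)}) ->
  (forall i tau, 0 < tau -> is_derive tau 1 (phi i) (dphi i tau)) ->
  (forall i tau, 0 < tau -> (forall k, phi k tau <= phi i tau) -> dphi i tau <= 0) ->
  (forall i, phi i 0 <= B) ->
  forall i T, 0 <= T -> phi i T <= B.
Proof.
move=> phic phid phimax phi0 i0 T T0.
suff barrier eps : 0 < eps -> phi i0 T <= B + eps + eps * T.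
  apply/ler_addgt0Pr => e e0; have T1 : 0 < 1 + T by lra.
  have -> : B + e = B + e / (1 + T) + e / (1 + T) * T by field; rewrite gt_eqF.
  exact: barrier (divr_gt0 e0 T1).
move=> eps0; rewrite leNgt; apply/negP => hT.
pose u i := phi i - (cst (B + eps) + eps \*: id).
have uE i s : u i s = phi i s - (B + eps + eps * s) by [].
have uc i : {within `[0, +oo[, continuous (u i)}.
  move=> x; apply: cvgB; first exact: phic.
  apply: continuous_subspaceT => y; apply: cvgD; first exact: cvg_cst.
  by apply: cvgZ; [exact: cvg_cst | exact: cvg_id].
have [tau [tau0 before at_tau [k uk]]] := @first_exit u T i0 uc
  ltac:(by move=> i; rewrite uE subr_lt0 mulr0 addr0 ltr_pwDr) T0
  ltac:(by rewrite uE subr_gt0).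
have kmax j : phi j tau <= phi k tau.
  by move: (at_tau j) uk; rewrite !uE; lra.
have du : is_derive tau 1 (u k) (dphi k tau - eps).
  apply: is_deriveB; first exact: phid.
  have := is_deriveD (is_derive_cst (B + eps) tau 1) (is_deriveZ eps (is_derive_id tau 1)).
  by rewrite add0r /GRing.scale /= mulr1.
have [del del0 Hd] := is_derive_lt0_left du ltac:(by have := phimax k tau tau0 kmax; lra).
have [s /andP[s0 st] tsd] := left_point del0 tau0.
by have := Hd _ tsd; rewrite opprB addrC subrK uk ltNge before // s0 st.
Qed.

End MaximumPrinciple.

(** * Sums over pairs of agents *)

Section PairSums.
Context {R : realType} {d N : nat}.
Variables (L : pred 'I_N) (P G : 'I_N -> 'rV[R]_d).

Lemma sum2_symmetrize (F : 'I_N -> 'I_N -> R) :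
  2 * \sum_(i | L i) \sum_(j | L j) F i j =
  \sum_(i | L i) \sum_(j | L j) (F i j + F j i).
Proof.
rewrite mulr_natl mulr2n [X in _ + X]exchange_big -big_split /=.
by apply: eq_bigr => i _; rewrite -big_split.
Qed.

Lemma sum2_dot_diff (V : 'I_N -> 'rV[R]_d) :
  \sum_(i | L i) \sum_(j | L j) dot (P i - P j) (V i - V j) =
  2 * \sum_(i | L i) \sum_(j | L j) dot (P i - P j) (V i).
Proof.
rewrite sum2_symmetrize; apply: eq_bigr => i _; apply: eq_bigr => j _.
by rewrite dotBr -dotNl opprB.
Qed.

Lemma sum3_dot_internal (a : 'I_N -> 'I_N -> R) : (forall i k, a i k = a k i) ->
  2 * \sum_(i | L i) \sum_(j | L j) \sum_(k | L k) a i k * dot (P i - P j) (G k - G i) =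
  - #|L|%:R * \sum_(i | L i) \sum_(k | L k) a i k * dot (P i - P k) (G i - G k).
Proof.
move=> a_sym; rewrite exchange_big /= mulr_sumr -sumr_const mulNr mulr_suml -sumrN.
apply: eq_bigr => j _; rewrite mul1r sum2_symmetrize -sumrN; apply: eq_bigr => i _.
rewrite -sumrN; apply: eq_bigr => k _; rewrite (a_sym k i) !(dotBl, dotBr); ring.
Qed.

Lemma sum2_dot_external_le (w : 'I_N -> R) (Gk : 'rV[R]_d) (Gb : R) :
  (forall i j, L i -> L j -> 0 <= w j * dot (P i - P j) (G i - G j)) ->
  (forall i, L i -> enorm (G i) <= Gb) -> enorm Gk <= Gb ->
  2 * \sum_(i | L i) \sum_(j | L j) w i * dot (P i - P j) (Gk - G i) <=
  (Gb + Gb) * \sum_(i | L i) \sum_(j | L j) `|w i - w j| * enorm (P i - P j).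
Proof.
move=> hD hG hGk; rewrite sum2_symmetrize mulr_sumr; apply: ler_sum => i Li.
rewrite mulr_sumr; apply: ler_sum => j Lj.
have -> : w i * dot (P i - P j) (Gk - G i) + w j * dot (P j - P i) (Gk - G j) =
    (w i - w j) * dot (P i - P j) (Gk - G i) - w j * dot (P i - P j) (G i - G j).
  by rewrite !(dotBl, dotBr); ring.
have GkGi : enorm (Gk - G i) <= Gb + Gb.
  by apply: le_trans (ler_enormD _ _) _; rewrite enormN lerD ?hG.
have : (w i - w j) * dot (P i - P j) (Gk - G i) <=
    `|w i - w j| * (enorm (P i - P j) * (Gb + Gb)).
  apply: le_trans (ler_norm _) _; rewrite normrM ler_wpM2l //.
  by apply: le_trans (norm_dot_le_enorm _ _) _; rewrite ler_wpM2l ?enorm_ge0.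
by have := hD i j Li Lj; rewrite mulrCA mulrA; lra.
Qed.

Variable a : 'I_N -> 'I_N -> R.

Definition alignment i : 'rV[R]_d := \sum_(k < N) a i k *: (G k - G i).

Lemma sum2_dot_alignment : (forall i k, a i k = a k i) ->
  \sum_(i | L i) \sum_(j | L j) dot (P i - P j) (alignment i - alignment j) =
  - #|L|%:R * \sum_(i | L i) \sum_(k | L k) a i k * dot (P i - P k) (G i - G k) +
  \sum_(k | ~~ L k) 2 * \sum_(i | L i) \sum_(j | L j) a i k * dot (P i - P j) (G k - G i).
Proof.
move=> a_sym; rewrite sum2_dot_diff -sum3_dot_internal // -mulr_sumr -mulrDr; congr (2 * _).
rewrite [X in _ + X]exchange_big -big_split /=; apply: eq_bigr => i _.
rewrite [X in _ + X]exchange_big -big_split /=; apply: eq_bigr => j _.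
rewrite /alignment dot_sumr (bigID L) /=.
by congr (_ + _); apply: eq_bigr => k _; rewrite dotZr.
Qed.

Lemma sum2_dot_alignment_le (w0 m Gb Bd : R) :
  (forall i k, a i k = a k i) -> (forall i k, 0 <= a i k) ->
  (forall i k, L i -> L k -> w0 <= a i k) -> 0 <= w0 -> 0 <= m ->
  (forall i k, L i -> L k -> m * dot (P i - P k) (P i - P k) <= dot (P i - P k) (G i - G k)) ->
  (forall i, enorm (G i) <= Gb) ->
  (forall k, ~~ L k ->
     \sum_(i | L i) \sum_(j | L j) `|a i k - a j k| * enorm (P i - P j) <= Bd) ->
  \sum_(i | L i) \sum_(j | L j) dot (P i - P j) (alignment i - alignment j) <=
  - #|L|%:R * (w0 * m * \sum_(i | L i) \sum_(k | L k) dot (P i - P k) (P i - P k)) +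
  #|[pred k | ~~ L k]|%:R * ((Gb + Gb) * Bd).
Proof.
move=> a_sym a_ge0 a_ge w0_ge0 m_ge0 coercive G_le B_le.
rewrite sum2_dot_alignment //; apply: lerD.
  rewrite !mulNr lerN2 ler_wpM2l // !mulr_sumr; apply: ler_sum => i Li.
  rewrite !mulr_sumr; apply: ler_sum => k Lk; rewrite -mulrA.
  have coer := coercive i k Li Lk.
  have D_ge0 := le_trans (mulr_ge0 m_ge0 (dot_ge0 _)) coer.
  exact: le_trans (ler_wpM2l w0_ge0 coer) (ler_wpM2r D_ge0 (a_ge i k Li Lk)).
rewrite -sum1_card natr_sum mulr_suml; apply: ler_sum => k Lk; rewrite mul1r.
have Gb0 : 0 <= Gb := le_trans (enorm_ge0 _) (G_le k).
apply: le_trans (sum2_dot_external_le (fun i => a i k) (G k) Gb _ (fun i _ => G_le i) (G_le k)) _.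
  move=> i j Li Lj; apply: mulr_ge0 => //; apply: le_trans (coercive i j Li Lj).
  exact: mulr_ge0 (dot_ge0 _).
by rewrite ler_wpM2l ?addr_ge0 ?B_le.
Qed.

End PairSums.

Lemma card_ord_lt (N l : nat) : (l <= N)%N -> #|[pred i : 'I_N | (i < l)%N]| = l.
Proof.
move=> lN; rewrite -sum1_card -[RHS]card_ord -sum1_card.
rewrite (big_ord_widen_cond _ xpredT (fun _ => 1%N) lN) /=.
by apply: eq_bigl => i; rewrite !inE.
Qed.

Lemma card_ord_ge (N l : nat) : (l <= N)%N -> #|[pred i : 'I_N | ~~ (i < l)%N]| = (N - l)%N.
Proof.
move=> lN; have := cardC [pred i : 'I_N | (i < l)%N].
by rewrite card_ord card_ord_lt // => eqN; rewrite -[in RHS]eqN addKn.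
Qed.

Section ConfigurationQuantities.
Context {R : realType} {N d : nat}.
Implicit Types (x : 'I_N -> 'rV[R]_d) (psi : R -> R) (i k : 'I_N).

Lemma PM_ge0 x : 0 <= PM x.
Proof.
rewrite /PM; elim/big_ind: _ => // [u v hu hv|i _]; last exact: enorm_ge0.
by rewrite le_max hu.
Qed.

Lemma enorm_le_PM x i : enorm (x i) <= PM x.
Proof. exact: le_bigmax. Qed.

Lemma qmin_ge0 l x : 0 <= qmin l x.
Proof.
rewrite /qmin; set E := [set _ | _ in _ & _ in _].
have [->|/set0P Ene] := eqVneq E set0; first by rewrite inf0.
by apply: lb_le_inf Ene _ => _ [i _ [k _ <-]]; exact: enorm_ge0.
Qed.

Lemma qmin_le l x i k : (i < l)%N -> ~~ (k < l)%N -> qmin l x <= enorm (x i - x k).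
Proof.
move=> il kl; apply: ge_inf; first by exists 0 => _ [i' _ [k' _ <-]]; exact: enorm_ge0.
by exists i => //; exists k => //=; rewrite leqNgt.
Qed.

Lemma Lpsi_ge0 psi (r0 : R) : 0 <= Lpsi psi r0.
Proof.
rewrite /Lpsi; set Z := [set z | _].
have [Zub|Znub] := pselect (has_ubound Z); last by rewrite sup_out // => -[].
apply: le_trans (ub_le_sup Zub _); last first.
  exists r0, (r0 + 1); split => //; first by rewrite lerDl.
  by apply/eqP; rewrite lt_eqF // ltrDl.
exact: normr_ge0.
Qed.

Lemma Lpsi_lipschitz {psi} {r0 r s : R} :
  (exists L : R, forall r s, 0 <= r -> 0 <= s -> `|psi r - psi s| <= L * `|r - s|) ->
  0 <= r0 -> r0 <= r -> r0 <= s -> `|psi r - psi s| <= Lpsi psi r0 * `|r - s|.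
Proof.
move=> [L lip] r00 r0r r0s; have [<-|rs] := eqVneq r s; first by rewrite !subrr normr0 mulr0.
have rs0 : 0 < `|r - s| by rewrite normr_gt0 subr_eq0.
rewrite -ler_pdivrMr // -normfV -normrM; apply: ub_le_sup; last first.
  by exists r, s; split => //; exact/eqP.
exists L => _ [r' [s' [r0r' r0s' rs' ->]]].
have rs0' : 0 < `|r' - s'| by rewrite normr_gt0 subr_eq0; exact/eqP.
rewrite normrM normfV ler_pdivrMr //; apply: lip; exact: le_trans r00 _.
Qed.

Lemma psimax_ge0 psi l x : (forall r, 0 <= r -> 0 <= psi r) -> 0 <= psimax psi l x.
Proof.
move=> psi_ge0; rewrite /psimax; elim/big_ind: _ => // [u v hu hv|i _].
  by rewrite le_max hu.
elim/big_ind: _ => // [u v hu hv|k _]; first by rewrite le_max hu.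
exact/psi_ge0/enorm_ge0.
Qed.

Lemma le_psimax psi l x i k : (i < l)%N -> ~~ (k < l)%N ->
  psi (enorm (x i - x k)) <= psimax psi l x.
Proof.
move=> il kl; apply: le_trans (le_bigmax_cond _ _ il).
by apply: le_bigmax_cond; rewrite leqNgt.
Qed.

Lemma normS_ge0 l x : 0 <= normS l x.
Proof. exact: sqrtr_ge0. Qed.

Lemma normS_sqr l x : normS l x ^+ 2 =
  \sum_(i < N | (i < l)%N) \sum_(j < N | (j < l)%N) dot (x i - x j) (x i - x j).
Proof.
rewrite sqr_sqrtr; last by do 2!(apply: sumr_ge0 => ? _); exact: sqr_ge0.
by do 2!(apply: eq_bigr => ? _); rewrite enorm_sqr.
Qed.

Lemma enorm_le_normS l x i k : (i < l)%N -> (k < l)%N -> enorm (x i - x k) <= normS l x.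
Proof.
move=> il kl; rewrite -(ger0_norm (enorm_ge0 _)) -sqrtr_sqr ler_sqrt; last first.
  by do 2!(apply: sumr_ge0 => ? _); exact: sqr_ge0.
rewrite (bigD1 i) //= (bigD1 k) //= -addrA lerDl.
by apply: addr_ge0; do ?[apply: sumr_ge0 => ? _]; exact: sqr_ge0.
Qed.

Lemma sum2_mul_enorm_le_normS l x (c : 'I_N -> 'I_N -> R) :
  \sum_(i < N | (i < l)%N) \sum_(j < N | (j < l)%N) c i j * enorm (x i - x j) <=
  Num.sqrt (\sum_(i < N | (i < l)%N) \sum_(j < N | (j < l)%N) c i j ^+ 2) * normS l x.
Proof. exact: sum2_mul_le_sqrt. Qed.

End ConfigurationQuantities.

(** * The Cucker-Smale flow *)

Lemma dot_alignment_le0 {R : realType} {d N : nat} (g : R -> R) (P : 'I_N -> 'rV[R]_d)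
    (a : 'I_N -> 'I_N -> R) j :
  g 0 = 0 -> (forall x y : R, 0 <= y <= x -> g y <= g x) ->
  (forall k, 0 <= a j k) -> (forall k, enorm (P k) <= enorm (P j)) ->
  dot (P j) (alignment (fun k => Gvel g (P k)) a j) <= 0.
Proof.
move=> g0 g_mono a_ge0 j_max; rewrite dot_sumr sumr_le0 // => k _.
rewrite dotZr dotBr dot_Gvel_self mulr_ge0_le0 // subr_le0.
have g_ge0 (x : R) : 0 <= x -> 0 <= g x by move=> x0; rewrite -g0 g_mono // lexx.
apply: le_trans (dot_le_enorm _ _) _; rewrite enorm_Gvel ?g_ge0 ?enorm_ge0 //.
by rewrite [leRHS]mulrC ler_wpM2l ?enorm_ge0 // g_mono // enorm_ge0 j_max.
Qed.

Lemma is_derive_sqr_eq {R : realType} {f S : R -> R} {t df dS : R} :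
  is_derive t 1 f df -> is_derive t 1 S dS -> (forall s, f s ^+ 2 = S s) ->
  2 * f t * df = dS.
Proof.
move=> hf hS fS; have ff : f * f = S by apply/funext => s; rewrite -fS expr2.
have := @derive_val _ _ _ _ _ _ _ (is_deriveM hf hf).
rewrite ff (@derive_val _ _ _ _ _ _ _ hS) /GRing.scale /= => ->; ring.
Qed.

Section CuckerSmale.
Variables (R : realType) (N d : nat) (kappa : R) (g dg psi : R -> R).
Variables q p : 'I_N -> R -> 'rV[R]_d.
Implicit Types (r s t : R) (i j k : 'I_N).

Local Notation weight t := (fun i k => psi (enorm (q k t - q i t))).
Local Notation Gp t := (fun i => Gvel g (p i t)).
Local Notation P0M := (PM (fun i => p i 0)).
Local Notation dgP := [set dg r | r in `[0, P0M]].

Hypothesis N_gt0 : (0 < N)%N.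
Hypothesis kappa_gt0 : 0 < kappa.
Hypothesis g_deriv : forall r : R, 0 < r -> is_derive r 1 g (dg r).
Hypothesis g_deriv0 : (fun h : R => (g h - g 0) / h) @ 0^'+ --> dg 0.
Hypothesis g0 : g 0 = 0.
Hypothesis dg_bounded : forall b : R, 0 <= b -> exists m M : R, 0 < m /\
  forall r : R, 0 <= r <= b -> m <= dg r <= M.
Hypothesis psi_gt0 : forall r : R, 0 <= r -> 0 < psi r.
Hypothesis psi_lipschitz : exists L : R, forall r s : R, 0 <= r -> 0 <= s ->
  `|psi r - psi s| <= L * `|r - s|.
Hypothesis psi_noninc : forall r s : R, 0 <= r -> r <= s -> psi s <= psi r.
Hypothesis p_cont : forall i, {within `[0, +oo[, continuous (p i)}.
Hypothesis p_deriv : forall i (t : R), 0 < t ->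
  is_derive t 1 (p i) ((kappa / N%:R) *: alignment (Gp t) (weight t) i).

Let psi_ge0 r : 0 <= r -> 0 <= psi r.
Proof. by move/psi_gt0/ltW. Qed.

Let weight_ge0 t i k : 0 <= weight t i k.
Proof. exact/psi_ge0/enorm_ge0. Qed.

Lemma speed_le_PM i t : 0 <= t -> enorm (p i t) <= P0M.
Proof.
have sqr_le (x y : R) : 0 <= x -> 0 <= y -> (x <= y) = (x ^+ 2 <= y ^+ 2).
  by move=> x0 y0; rewrite ler_pXn2r ?nnegrE.
move=> t0; rewrite sqr_le ?enorm_ge0 ?PM_ge0 // enorm_sqr.
apply: (@max_principle _ _ (fun i s => dot (p i s) (p i s))
  (fun i s => 2 * dot (p i s) ((kappa / N%:R) *: alignment (Gp s) (weight s) i)))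
  => // [j x|j s s0|j s s0 j_max|j].
- by have pjx := p_cont j x; rewrite /continuous_at /from_subspace in pjx *; exact: cvg_dot.
- apply: is_derive_eq (is_derive_dot (p_deriv j s s0) (p_deriv j s s0)) _.
  by rewrite [X in _ + X]dotC; ring.
- rewrite dotZr pmulr_rle0 // pmulr_rle0 ?divr_gt0 ?ltr0n //.
  apply: dot_alignment_le0 => // [x y|k]; first exact: g_nondecreasing.
  by rewrite sqr_le ?enorm_ge0 // !enorm_sqr.
- by rewrite -enorm_sqr -sqr_le ?enorm_ge0 ?PM_ge0 // enorm_le_PM.
Qed.

Local Notation MG := (sup dgP).
Local Notation mG := (inf dgP).

Let P0M_ge0 : 0 <= P0M := PM_ge0 _.

Lemma increment_speed i j t : 0 <= t -> enorm (p j t) <= enorm (p i t) ->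
  mG * (enorm (p i t) - enorm (p j t)) <= g (enorm (p i t)) - g (enorm (p j t)) <=
  MG * (enorm (p i t) - enorm (p j t)).
Proof.
by move=> t0 ji; apply: increment_inf_sup_dg; rewrite ?enorm_ge0 ?ji ?speed_le_PM.
Qed.

Lemma g_speed_bounds i t : 0 <= t ->
  mG * enorm (p i t) <= g (enorm (p i t)) <= MG * enorm (p i t).
Proof.
move=> t0; have := @increment_inf_sup_dg _ g dg g_deriv g_deriv0 dg_bounded _ P0M_ge0
  (enorm (p i t)) 0.
by rewrite g0 !subr0 lexx enorm_ge0 speed_le_PM //; apply.
Qed.

Lemma Gvel_le_MG_PM i t : 0 <= t -> enorm (Gvel g (p i t)) <= MG * P0M.
Proof.
move=> t0; have /andP[lo hi] := g_speed_bounds i t t0.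
have mG_pos : 0 < mG by apply: inf_dg_gt0.
rewrite enorm_Gvel //; last exact: le_trans (mulr_ge0 (ltW mG_pos) (enorm_ge0 _)) lo.
apply: le_trans hi _; rewrite ler_wpM2l ?speed_le_PM //.
by apply/ltW; apply: sup_dg_gt0.
Qed.

Lemma velocity_coercive i j t : 0 <= t ->
  mG * dot (p i t - p j t) (p i t - p j t) <=
  dot (p i t - p j t) (Gvel g (p i t) - Gvel g (p j t)).
Proof.
move=> t0; have /andP[lo_i _] := g_speed_bounds i t t0.
have /andP[lo_j _] := g_speed_bounds j t t0; apply: Gvel_coercive lo_i lo_j _.
have sq (x y : R) : y <= x -> mG * (x - y) <= g x - g y ->
    mG * (x - y) ^+ 2 <= (x - y) * (g x - g y).
  by move=> yx inc; rewrite expr2 mulrA [_ * (_ - _)]mulrC ler_wpM2l // subr_ge0.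
have [ji|ij] := lerP (enorm (p j t)) (enorm (p i t)).
  by apply: sq => //; case/andP: (increment_speed i j t t0 ji).
rewrite -sqrrN opprB -[leRHS]mulrNN !opprB; apply: sq; first exact: ltW.
by case/andP: (increment_speed j i t t0 (ltW ij)).
Qed.

Section AtTime.
Variables (l : nat) (t : R).
Hypothesis l_le_N : (l <= N)%N.
Hypothesis t_gt0 : 0 < t.

Local Notation nP := (normS l (fun i => p i t)).
Local Notation nQ := (normS l (fun i => q i t)).
Local Notation A := (alignment (Gp t) (weight t)).
Local Notation weight_variation k :=
  (\sum_(i < N | (i < l)%N) \sum_(j < N | (j < l)%N)
     `|weight t i k - weight t j k| * enorm (p i t - p j t)).

Lemma normS_derive : derivable (fun s => normS l (fun i => p i s)) t 1 ->
  nP * derive1 (fun s => normS l (fun i => p i s)) t =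
  kappa / N%:R * \sum_(i < N | (i < l)%N) \sum_(j < N | (j < l)%N)
    dot (p i t - p j t) (A i - A j).
Proof.
move=> f_der; set c := kappa / N%:R.
have dS : is_derive t 1 (fun s => \sum_(i < N | (i < l)%N) \sum_(j < N | (j < l)%N)
      dot (p i s - p j s) (p i s - p j s))
    (2 * \sum_(i < N | (i < l)%N) \sum_(j < N | (j < l)%N)
      dot (p i t - p j t) (c *: A i - c *: A j)).
  rewrite mulr_sumr; apply: is_derive_bigsum => i; rewrite mulr_sumr.
  apply: is_derive_bigsum => j.
  have dij : is_derive t 1 (fun s => p i s - p j s) (c *: A i - c *: A j).
    exact: is_deriveB (p_deriv i t t_gt0) (p_deriv j t t_gt0).
  by apply: is_derive_eq (is_derive_dot dij dij) _; rewrite [X in _ + X]dotC; ring.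
have := is_derive_sqr_eq (derivableP f_der) dS (fun s => normS_sqr l (fun i => p i s)).
have two_neq0 : (2 : R) != 0 by rewrite pnatr_eq0.
rewrite derive1E -mulrA => /(mulfI two_neq0) ->.
rewrite mulr_sumr; apply: eq_bigr => i _; rewrite mulr_sumr; apply: eq_bigr => j _.
by rewrite -scalerBr dotZr.
Qed.

Lemma alignment_energy_le (Bd : R) :
  (forall k, ~~ (k < l)%N -> weight_variation k <= Bd) ->
  \sum_(i < N | (i < l)%N) \sum_(j < N | (j < l)%N) dot (p i t - p j t) (A i - A j) <=
  - l%:R * (psi nQ * mG * nP ^+ 2) + (N - l)%:R * ((MG * P0M + MG * P0M) * Bd).
Proof.
move=> weight_variation_le; have t0 := ltW t_gt0.
apply: le_trans (sum2_dot_alignment_le (fun i => (i < l)%N) (fun i => p i t) (Gp t)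
  (weight t) (psi nQ) mG (MG * P0M) Bd _ _ _ _ _ _ _ _) _.
- by move=> i k; rewrite /= enorm_distC.
- exact: weight_ge0.
- move=> i k il kl; apply: psi_noninc; first exact: enorm_ge0.
  exact: enorm_le_normS.
- exact/psi_ge0/normS_ge0.
- by apply/ltW; apply: inf_dg_gt0.
- by move=> i k _ _; exact: velocity_coercive.
- by move=> i; exact: Gvel_le_MG_PM.
- exact: weight_variation_le.
by rewrite card_ord_lt // card_ord_ge // normS_sqr.
Qed.

Lemma derive_normS_le (Bd : R) : 0 <= Bd ->
  (forall k, ~~ (k < l)%N -> weight_variation k <= Bd * nP) ->
  derivable (fun s => normS l (fun i => p i s)) t 1 ->
  derive1 (fun s => normS l (fun i => p i s)) t <=
  - (kappa * Num.min mG (mG ^+ 2 / MG) * l%:R / N%:R) * psi nQ * nP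
  + 2 * (kappa / N%:R) * (N - l)%:R * (MG * P0M) * Bd.
Proof.
move=> Bd0 weight_variation_le f_der.
set calM := Num.min _ _; set c := kappa / N%:R.
have c0 : 0 <= c by rewrite divr_ge0 ?ler0n // ltW.
have MG0 : 0 <= MG by apply/ltW; apply: sup_dg_gt0.
have [nP0|nP_neq0] := eqVneq nP 0.
  (* [t] is a minimum of the nonnegative function [normS], so its derivative is [<= 0] *)
  rewrite derive1E; apply: le_trans (is_derive_min_le0 (derivableP f_der) _) _.
    by move=> y /=; rewrite nP0 normS_ge0.
  rewrite nP0 mulr0 add0r.
  by do !apply: mulr_ge0; rewrite ?ler0n ?PM_ge0 ?invr_ge0 ?ler0n ?(ltW kappa_gt0).
have nP_gt0 : 0 < nP by rewrite lt_def nP_neq0 normS_ge0.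
rewrite -(ler_pM2l nP_gt0) normS_derive //.
apply: le_trans (ler_wpM2l c0 (alignment_energy_le _ weight_variation_le)) _.
have -> : nP * (- (kappa * calM * l%:R / N%:R) * psi nQ * nP
    + 2 * c * (N - l)%:R * (MG * P0M) * Bd) =
  c * (- l%:R * (psi nQ * calM * nP ^+ 2) +
       (N - l)%:R * ((MG * P0M + MG * P0M) * (Bd * nP))) by rewrite /c; ring.
rewrite ler_wpM2l // lerD2r !mulNr lerN2 ler_wpM2l ?ler0n //.
by rewrite ler_wpM2r ?sqr_ge0 // ler_wpM2l ?psi_ge0 ?normS_ge0 // ge_min lexx.
Qed.

Lemma weight_variation_le_Lpsi k : ~~ (k < l)%N ->
  weight_variation k <= Lpsi psi (qmin l (fun i => q i t)) * nQ * nP.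
Proof.
move=> kl; set Lp := Lpsi _ _; have Lp0 : 0 <= Lp := Lpsi_ge0 _ _.
have weight_lip i j : (i < l)%N -> (j < l)%N ->
    `|weight t i k - weight t j k| <= Lp * enorm (q i t - q j t).
  move=> il jl; apply: le_trans (Lpsi_lipschitz (r0 := qmin l (fun i => q i t))
    psi_lipschitz (qmin_ge0 _ _) _ _) _.
  - by rewrite enorm_distC qmin_le.
  - by rewrite enorm_distC qmin_le.
  rewrite ler_wpM2l //; apply: le_trans (ler_enorm_dist _ _) _.
  by rewrite opprB addrC addrA subrK enorm_distC.
apply: le_trans (_ : \sum_(i < N | (i < l)%N) \sum_(j < N | (j < l)%N)
    Lp * (enorm (q i t - q j t) * enorm (p i t - p j t)) <= _).
  apply: ler_sum => i il; apply: ler_sum => j jl.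
  by rewrite mulrA ler_wpM2r ?enorm_ge0 ?weight_lip.
rewrite -mulrA; under eq_bigr do rewrite -mulr_sumr; rewrite -mulr_sumr ler_wpM2l //.
exact: sum2_mul_enorm_le_normS.
Qed.

Lemma weight_variation_le_psimax k : ~~ (k < l)%N ->
  weight_variation k <= psimax psi l (fun i => q i t) * l%:R * nP.
Proof.
move=> kl; set M := psimax _ _ _; have M0 : 0 <= M := psimax_ge0 _ _ _ psi_ge0.
have weight_le i : (i < l)%N -> weight t i k <= M.
  by move=> il; rewrite /= enorm_distC; exact: le_psimax.
apply: le_trans (_ : \sum_(i < N | (i < l)%N) \sum_(j < N | (j < l)%N)
    M * (1 * enorm (p i t - p j t)) <= _).
  apply: ler_sum => i il; apply: ler_sum => j jl; rewrite mulrA mulr1.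
  rewrite ler_wpM2r ?enorm_ge0 // ler_norml.
  have := weight_le i il; have := weight_le j jl.
  by have := weight_ge0 t i k; have := weight_ge0 t j k; lra.
rewrite -mulrA; under eq_bigr do rewrite -mulr_sumr; rewrite -mulr_sumr ler_wpM2l //.
apply: le_trans (sum2_mul_enorm_le_normS _ _ (fun _ _ => 1)) _.
have count : \sum_(j < N | (j < l)%N) (1 : R) = l%:R.
  by rewrite -[in RHS](card_ord_lt _ _ l_le_N) -sum1_card natr_sum.
have -> : \sum_(i < N | (i < l)%N) \sum_(j < N | (j < l)%N) (1 : R) ^+ 2 = l%:R ^+ 2.
  under eq_bigr do under eq_bigr do rewrite expr1n.
  by under eq_bigr do rewrite count -[l%:R]mulr1; rewrite -mulr_sumr count expr2.
by rewrite sqrtr_sqr ger0_norm ?ler0n.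
Qed.

Lemma derive_normS_le_Lpsi : derivable (fun s => normS l (fun i => p i s)) t 1 ->
  derive1 (fun s => normS l (fun i => p i s)) t <=
  - (kappa * Num.min mG (mG ^+ 2 / MG) * l%:R / N%:R) * psi nQ * nP
  + 2 * kappa * MG * (N - l)%:R * P0M * Lpsi psi (qmin l (fun i => q i t)) / N%:R * nQ.
Proof.
move=> f_der; set Lp := Lpsi _ _.
have -> : 2 * kappa * MG * (N - l)%:R * P0M * Lp / N%:R * nQ =
  2 * (kappa / N%:R) * (N - l)%:R * (MG * P0M) * (Lp * nQ) by ring.
apply: derive_normS_le f_der; first exact: mulr_ge0 (Lpsi_ge0 _ _) (normS_ge0 _ _).
exact: weight_variation_le_Lpsi.
Qed.

Lemma derive_normS_le_psimax : derivable (fun s => normS l (fun i => p i s)) t 1 ->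
  derive1 (fun s => normS l (fun i => p i s)) t <=
  - (kappa * Num.min mG (mG ^+ 2 / MG) * l%:R / N%:R) * psi nQ * nP
  + 4 * kappa * P0M * MG * l%:R * (N - l)%:R / N%:R * psimax psi l (fun i => q i t).
Proof.
move=> f_der; set M := psimax _ _ _.
have Ml0 : 0 <= M * l%:R by rewrite mulr_ge0 ?ler0n ?psimax_ge0.
apply: le_trans (derive_normS_le _ Ml0 weight_variation_le_psimax f_der) _.
have MG0 : 0 <= MG by apply/ltW; apply: sup_dg_gt0.
rewrite lerD2l -subr_ge0.
have -> : 4 * kappa * P0M * MG * l%:R * (N - l)%:R / N%:R * M -
    2 * (kappa / N%:R) * (N - l)%:R * (MG * P0M) * (M * l%:R) =
  2 * (kappa / N%:R) * (N - l)%:R * (MG * P0M) * (M * l%:R) by ring.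
by do !apply: mulr_ge0; rewrite ?ler0n ?PM_ge0 ?invr_ge0 ?ler0n ?(ltW kappa_gt0) ?psimax_ge0.
Qed.

End AtTime.

End CuckerSmale.

Theorem lemma2p1 (R : realType) (N d : nat) (kappa : R)
  (g dg : R -> R) (psi : R -> R)
  (q p : 'I_N -> R -> 'rV[R]_d) (l : nat) :
  (0 < N)%N -> (0 < d)%N -> 0 < kappa ->
  (* g in C^1([0,oo)) with derivative dg (right derivative at 0) *)
  (forall r : R, 0 < r -> is_derive r 1 g (dg r)) ->
  ((fun h : R => (g h - g 0) / h) @ 0^'+ --> dg 0) ->
  {within `[0, +oo[, continuous dg} ->
  g 0 = 0 ->
  (forall b, 0 <= b -> exists m M : R, 0 < m /\
      forall r, 0 <= r <= b -> m <= dg r <= M) ->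
  (convex_on_pos g \/ concave_on_pos g) ->
  (* kernel psi : positive, bounded, Lipschitz, nonincreasing *)
  (forall r, 0 <= r -> 0 < psi r) ->
  (exists B : R, forall r, 0 <= r -> psi r <= B) ->
  (exists L : R, forall r s, 0 <= r -> 0 <= s -> `|psi r - psi s| <= L * `|r - s|) ->
  (forall r s, 0 <= r -> r <= s -> psi s <= psi r) ->
  (* (q,p) is a solution on [0,oo): continuous on [0,oo), satisfying the ODE for t > 0 *)
  (forall i, {within `[0, +oo[, continuous (q i)}) ->
  (forall i, {within `[0, +oo[, continuous (p i)}) ->
  (forall i (t : R), 0 < t -> is_derive t 1 (q i) (Gvel g (p i t))) ->
  (forall i (t : R), 0 < t -> is_derive t 1 (p i)
      ((kappa / N%:R) *: \sum_(k < N)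
          (psi (enorm (q k t - q i t)) *: (Gvel g (p k t) - Gvel g (p i t))))) ->
  (1 <= l <= N)%N ->
  let P0M := PM (fun i => p i 0) in
  let MG := sup [set dg r | r in `[0, P0M]] in
  let mG := inf [set dg r | r in `[0, P0M]] in
  let calM := Num.min mG (mG ^+ 2 / MG) in
  forall t : R, 0 < t ->
  derivable (fun s => normS l (fun i => p i s)) t 1 ->
  let nP := normS l (fun i => p i t) in
  let nQ := normS l (fun i => q i t) in
  derive1 (fun s : R => normS l (fun i => p i s)) t <=
     - (kappa * calM * l%:R / N%:R) * psi nQ * nP
     + 2 * kappa * MG * (N - l)%:R * P0M * Lpsi psi (qmin l (fun i => q i t)) / N%:R * nQ
  /\
  derive1 (fun s : R => normS l (fun i => p i s)) t <=
     - (kappa * calM * l%:R / N%:R) * psi nQ * nP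
     + 4 * kappa * P0M * MG * l%:R * (N - l)%:R / N%:R * psimax psi l (fun i => q i t).
Proof.
move=> N_gt0 _ kappa_gt0 g_deriv g_deriv0 _ g0 dg_bounded _ psi_gt0 _ psi_lipschitz
  psi_noninc _ p_cont _ p_deriv /andP[_ l_le_N] P0M MG mG calM t t_gt0 f_der nP nQ.
by split; [apply: derive_normS_le_Lpsi | apply: derive_normS_le_psimax].
Qed.
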